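(* Let $r\in\mathcal{Q}'(1)$ and suppose $r$ contains a pure term, i.e. a monomial $z^k$ or $\overline z^k$ with $k\ge1$ and nonzero coefficient. Then $r(0,0)>0$.
   Context: $\mathcal{Q}'(1)$: Hermitian symmetric polynomials $r(z,\overline z)=\sum c_{jk}z^j\overline z^k$ ($c_{jk}=\overline{c_{kj}}$) in one complex variable with $r(z,\overline z)\ge0$ for all $z$ for which there exist a Hermitian symmetric polynomial $s\ge0$, not identically $0$, and a holomorphic polynomial mapping $F$ with $rs=\|F\|^2$. *)

From HB Require Import structures.
From mathcomp Require Import all_boot all_order all_algebra.
From mathcomp Require Import complex.
From mathcomp Require Import reals.
Set Implicit Arguments. Unset Strict Implicit. Unset Printing Implicit Defensive.
Import Order.TTheory GRing.Theory Num.Theory.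
Local Open Scope ring_scope.

Definition hpoly_eval (R : realType) (n : nat) (c : 'M[R[i]]_n) (z : R[i]) : R[i] :=
  \sum_(j < n) \sum_(k < n) c j k * z ^+ j * (z^*)%C ^+ k.

Definition hermitian (R : realType) (n : nat) (c : 'M[R[i]]_n) : Prop :=
  forall j k : 'I_n, c j k = (c k j)^*%C.

Definition hpoly_nonneg (R : realType) (n : nat) (c : 'M[R[i]]_n) : Prop :=
  forall z : R[i], 0 <= hpoly_eval c z.

Definition sqnorm_map (R : realType) (N : nat) (F : 'I_N -> {poly R[i]}) (z : R[i]) : R[i] :=
  \sum_(l < N) `|(F l).[z]| ^+ 2.

Definition in_Qprime1 (R : realType) (n : nat) (c : 'M[R[i]]_n) : Prop :=
  hermitian c /\ hpoly_nonneg c /\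
  exists (m : nat) (d : 'M[R[i]]_m) (N : nat) (F : 'I_N -> {poly R[i]}),
    [/\ hermitian d, hpoly_nonneg d, (exists z, hpoly_eval d z != 0) &
        forall z, hpoly_eval c z * hpoly_eval d z = sqnorm_map F z].

Definition has_pure_term (R : realType) (n : nat) (c : 'M[R[i]]_n) : Prop :=
  exists (k : 'I_n) (i0 : 'I_n), (0 < k)%N /\ val i0 = 0%N /\
    (c k i0 != 0 \/ c i0 k != 0).

(* r(0,0) = c_{00} (zero if n = 0). *)
Definition hpoly_at0 (R : realType) (n : nat) (c : 'M[R[i]]_n) : R[i] :=
  hpoly_eval c 0.

From Pilot Require Import Defs.
From HB Require Import structures.
From mathcomp Require Import all_boot all_order all_algebra.
From mathcomp Require Import complex reals ring zify.
Import Order.TTheory GRing.Theory Num.Theory.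
Local Open Scope ring_scope.
Set Implicit Arguments. Unset Strict Implicit. Unset Printing Implicit Defensive.

(* Read r, s and ||F||^2 as polynomials in two independent variables z and
   w = zbar.  A polynomial in z and zbar that vanishes identically has zero
   coefficients (restrict it to rays through infinitely many points of the unit
   circle), so r s = ||F||^2 holds coefficientwise.  Suppose r(0,0) = 0 and let
   w^m be the lowest power of w in s.  By Hermitian symmetry the w^m row of s
   starts at z^m, so the z^m w^m coefficient of r s vanishes.  For
   ||F||^2 = sum_l F_l(z) conj(F_l)(w) a zero diagonal coefficient kills the
   m-th coefficient of every F_l, hence the whole w^m row.  That row is
   r_0(z) s_m(z), a product of nonzero polynomials: r_0 <> 0 is the pure
   term. *)

Lemma coefM_lowest (R : nzRingType) (p q : {poly R}) (n : nat) :
  (forall i, (i < n)%N -> q`_i = 0) -> (p * q)`_n = p`_0 * q`_n.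
Proof.
move=> qlow; have take0 : take_poly n q = 0.
  by apply/polyP => i; rewrite coef_take_poly coef0; case: ltnP => // /qlow.
rewrite -[q](poly_take_drop n) take0 add0r mulrA !coefMXn ltnn subnn coef0M.
by rewrite coef_drop_poly.
Qed.

Lemma poly_eq0_on_inj (R : idomainType) (p : {poly R}) (g : nat -> R) :
  injective g -> (forall x, p.[g x] = 0) -> p = 0.
Proof.
move=> g_inj pg0; apply: (@roots_geq_poly_eq0 _ p (map g (iota 0 (size p)))).
- by apply/allP => x /mapP [y _ ->]; rewrite /root pg0.
- by rewrite map_inj_uniq // iota_uniq.
- by rewrite size_map size_iota.
Qed.

Lemma sumr_ord_indicator (R : pzSemiRingType) (n : nat) (F : 'I_n -> R)
    (a0 : 'I_n) :
  \sum_(a < n) F a * (a0 == a :> nat)%:R = F a0.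
Proof.
rewrite (bigD1 a0) //= eqxx mulr1 big1 ?addr0 // => a.
by rewrite val_eqE eq_sym => /negbTE ->; rewrite mulr0.
Qed.

Section Cayley.
Variable R : rcfType.
Local Notation C := R[i].

Lemma conjc_i : ('i%C : C)^*%C = - 'i%C.
Proof. by apply/eqP; rewrite eq_complex /= oppr0 !eqxx. Qed.

Lemma natr_addi_neq0 (x : nat) : (x%:R + 'i%C : C) != 0.
Proof.
apply/eqP => /(congr1 (@complex.Im R)); rewrite raddfD raddfMn /= mul0rn add0r.
exact/eqP/oner_neq0.
Qed.

Lemma conjc_natr_addi (x : nat) : (x%:R + 'i%C : C)^*%C = x%:R - 'i%C.
Proof. by rewrite rmorphD /= conjc_nat -conjc_i. Qed.

Definition cayley (x : nat) : C := (x%:R + 'i%C) / (x%:R - 'i%C).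

Lemma cayley_unit (x : nat) : cayley x * (cayley x)^*%C = 1.
Proof.
rewrite /cayley -conjc_natr_addi; set w := _ + _.
have w0 : w != 0 by exact: natr_addi_neq0.
rewrite rmorphM /= conjc_inv conjcK mulf_div [_^*%C * w]mulrC divff //.
by rewrite mulf_neq0 ?conjc_eq0.
Qed.

Lemma cayley_inj : injective cayley.
Proof.
move=> x y; rewrite /cayley -!conjc_natr_addi => /eqP.
rewrite eqr_div ?conjc_eq0 ?natr_addi_neq0 // !conjc_natr_addi => /eqP exy.
have : 2%:R * 'i%C * (y%:R - x%:R) = 0 :> C.
  by rewrite -(subrr ((y%:R + 'i%C) * (x%:R - 'i%C))) -{1}exy; ring.
have i0 : 'i%C != 0 :> C by have := natr_addi_neq0 0; rewrite add0r.
by move/eqP; rewrite !mulf_eq0 pnatr_eq0 (negbTE i0) subr_eq0 eqr_nat => /eqP.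
Qed.
End Cayley.

Section HermitianPoly.
Variable R : realType.
Local Notation C := R[i].

Lemma hpoly_eval_homog_eq0 (n : nat) (c : 'M[C]_n) (u : C) :
  (forall z, hpoly_eval c z = 0) -> forall p : nat,
  \sum_(j < n) \sum_(k < n) c j k * u ^+ j * u^*%C ^+ k * (p == j + k)%N%:R = 0.
Proof.
move=> c0 p.
pose T : {poly C} :=
  \sum_(j < n) \sum_(k < n) (c j k * u ^+ j * u^*%C ^+ k) *: 'X^(j + k)%N.
have T0 : T = 0.
  apply: (@poly_eq0_on_inj _ T (fun t => t%:R)) => [x y /eqP|t].
    by rewrite eqr_nat => /eqP.
  rewrite -(c0 (t%:R * u)) /T /hpoly_eval horner_sum; apply: eq_bigr => j _.
  rewrite horner_sum; apply: eq_bigr => k _.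
  rewrite hornerZ hornerXn rmorphM /= conjc_nat !exprMn exprD; ring.
rewrite -[RHS](coef0 _ p) -T0 /T coef_sum; apply: eq_bigr => j _.
by rewrite coef_sum; apply: eq_bigr => k _; rewrite coefZ coefXn.
Qed.

Lemma hpoly_eval_eq0 (n : nat) (c : 'M[C]_n) :
  (forall z, hpoly_eval c z = 0) -> c = 0.
Proof.
move=> c0; apply/matrixP => j0 k0; rewrite mxE.
pose p := (j0 + k0)%N.
pose Q : {poly C} :=
  \sum_(j < n) \sum_(k < n) (c j k * (p == j + k)%N%:R) *: 'X^(j + j)%N.
(* On the unit circle u^* = u^-1, so u^p times the degree-p homogeneous part
   of c is Q evaluated at u. *)
have Q0 : Q = 0.
  apply: (poly_eq0_on_inj (@cayley_inj R)) => x.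
  have := cayley_unit R x; set u := cayley R x; clearbody u => uJ.
  rewrite -[RHS](mulr0 (u ^+ p)) -(hpoly_eval_homog_eq0 u c0 p) mulr_sumr.
  rewrite horner_sum; apply: eq_bigr => j _; rewrite mulr_sumr horner_sum.
  apply: eq_bigr => k _; rewrite hornerZ hornerXn.
  case: eqP => [->|_]; last by rewrite !mulr0 mul0r.
  by rewrite !mulr1 !exprD -[LHS]mulr1 -(expr1n _ k) -uJ exprMn; ring.
rewrite -[RHS](coef0 _ (j0 + j0)) -Q0 /Q coef_sum.
rewrite -(sumr_ord_indicator (fun j => c j k0) j0); apply: eq_bigr => j _.
rewrite -(sumr_ord_indicator (c j) k0) mulr_suml coef_sum; apply: eq_bigr => k _.
rewrite coefZ coefXn -!mulrA -!natrM !mulnb; congr (_ * (nat_of_bool _)%:R).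
by apply/andP/andP => -[/eqP eq1 /eqP eq2]; split; apply/eqP; rewrite /p; lia.
Qed.

(* (hpolyXY c)`_k`_j = c j k: the outer variable stands for zbar, the inner
   one for z, so that evaluation at (zbar, z) is hpoly_eval. *)
Definition hpolyXY (n : nat) (c : 'M[C]_n) : {poly {poly C}} :=
  \sum_(j < n) \sum_(k < n) (c j k *: 'X^j)%:P * 'X^k.

Lemma hpolyXY_evalE (n : nat) (c : 'M[C]_n) (z : C) :
  (hpolyXY c).[z^*%C, z] = hpoly_eval c z.
Proof.
rewrite /hpolyXY !horner_sum; apply: eq_bigr => j _.
rewrite !horner_sum; apply: eq_bigr => k _.
by rewrite hornerCM hornerXn hornerM hornerZ hornerXn horner_exp hornerC.
Qed.

Lemma coef_hpolyXY (n : nat) (c : 'M[C]_n) (j k : nat) :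
  (hpolyXY c)`_k`_j = \sum_(a < n) \sum_(b < n) c a b * ((j == a) && (k == b))%:R.
Proof.
rewrite /hpolyXY !coef_sum; apply: eq_bigr => a _; rewrite !coef_sum.
apply: eq_bigr => b _; rewrite coefCM coefXn; case: (k == b).
  by rewrite andbT mulr1 coefZ coefXn; reflexivity.
by rewrite andbF /= !mulr0 coef0.
Qed.

Lemma coef_hpolyXY_ord (n : nat) (c : 'M[C]_n) (j k : 'I_n) :
  (hpolyXY c)`_k`_j = c j k.
Proof.
rewrite coef_hpolyXY -(sumr_ord_indicator (fun a => c a k) j).
apply: eq_bigr => a _.
by rewrite -(sumr_ord_indicator (c a) k) mulr_suml; apply: eq_bigr => b _;
  rewrite -mulrA -natrM mulnb andbC.
Qed.

Lemma hpolyXY_hermitian (n : nat) (c : 'M[C]_n) : Defs.hermitian c ->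
  forall j k : nat, (hpolyXY c)`_k`_j = ((hpolyXY c)`_j`_k)^*%C.
Proof.
move=> herm j k; rewrite !coef_hpolyXY rmorph_sum exchange_big /=.
apply: eq_bigr => a _; rewrite rmorph_sum; apply: eq_bigr => b _.
by rewrite rmorphM /= conjc_nat -herm andbC.
Qed.

Lemma hornerXY00 (u : {poly {poly C}}) : u.[0, 0] = u`_0`_0.
Proof. by rewrite !horner_coef0. Qed.

Definition sqnormXY (N : nat) (F : 'I_N -> {poly C}) : {poly {poly C}} :=
  \sum_(l < N) (F l)%:P * (map_poly conjc (F l))^:P.

Lemma sqnormXY_evalE (N : nat) (F : 'I_N -> {poly C}) (z : C) :
  (sqnormXY F).[z^*%C, z] = sqnorm_map F z.
Proof.
rewrite /sqnormXY !horner_sum; apply: eq_bigr => l _.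
by rewrite hornerCM hornerM horner_map /= hornerC horner_map /= sqr_normc.
Qed.

Lemma coef_sqnormXY (N : nat) (F : 'I_N -> {poly C}) (j k : nat) :
  (sqnormXY F)`_k`_j = \sum_(l < N) (F l)`_j * ((F l)`_k)^*%C.
Proof.
rewrite /sqnormXY !coef_sum; apply: eq_bigr => l _.
by rewrite coefCM coef_map /= coef_map /= coefMC.
Qed.

Lemma sqnormXY_diag_eq0 (N : nat) (F : 'I_N -> {poly C}) (m : nat) :
  (sqnormXY F)`_m`_m = 0 -> (sqnormXY F)`_m = 0.
Proof.
rewrite coef_sqnormXY => /(psumr_eq0P (fun l _ => mulcJ_ge0 _)) Fm0.
have {}Fm0 l : (F l)`_m = 0.
  by apply/eqP; rewrite -normr_eq0 -sqrf_eq0 sqr_normc Fm0.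
apply/polyP => j; rewrite coef_sqnormXY coef0 big1 // => l _.
by rewrite Fm0 conjc0 mulr0.
Qed.

Lemma polyXY_zzbar_eq0 (u : {poly {poly C}}) :
  (forall z, u.[z^*%C, z] = 0) -> u = 0.
Proof.
move=> u0; set B := maxn (size u) (sizeY u).
have sizeB : (size u <= B)%N by exact: leq_maxl.
have sizeBk k : (size (u`_k)%R <= B)%N.
  by apply: leq_trans (max_size_coefXY u k) (leq_maxr _ _).
pose c : 'M[C]_B := \matrix_(j, k) u`_k`_j.
have c0 : c = 0.
  apply: hpoly_eval_eq0 => z.
  rewrite -(u0 z) (horner_coef_wide _ sizeB) horner_sum.
  rewrite /hpoly_eval exchange_big; apply: eq_bigr => k _.
  rewrite hornerM horner_exp hornerC (horner_coef_wide _ (sizeBk k)) mulr_suml.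
  by apply: eq_bigr => j _; rewrite mxE.
apply/polyP => k; apply/polyP => j; rewrite !coef0.
have [kB|Bk] := ltnP k B.
  2: by rewrite (nth_default 0 (leq_trans sizeB Bk)) coef0.
have [jB|Bj] := ltnP j B.
  2: by rewrite (nth_default 0 (leq_trans (sizeBk k) Bj)).
by have := congr1 (fun m : 'M_B => m (Ordinal jB) (Ordinal kB)) c0; rewrite !mxE.
Qed.

Lemma sqnormXY_factor_coef00_neq0 (N : nat) (F : 'I_N -> {poly C})
    (U V : {poly {poly C}}) :
  U * V = sqnormXY F -> (forall j k, V`_k`_j = (V`_j`_k)^*%C) ->
  V != 0 -> U`_0 != 0 -> U`_0`_0 != 0.
Proof.
move=> UVF Vherm V0 U0; apply/eqP => U00.
have V_nz : exists i, V`_i != 0.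
  by exists (size V).-1; rewrite -lead_coefE lead_coef_eq0.
have [m Vm Vmin] := ex_minnP V_nz.
have Vlow i : (i < m)%N -> V`_i = 0.
  by move=> im; apply/eqP; apply: contraTT im => /Vmin; rewrite -leqNgt.
have Vm_low j : (j < m)%N -> V`_m`_j = 0.
  by move=> jm; rewrite Vherm Vlow // coef0 conjc0.
have Fm : (sqnormXY F)`_m = U`_0 * V`_m by rewrite -UVF coefM_lowest.
have : (sqnormXY F)`_m`_m = 0 by rewrite Fm coefM_lowest // U00 mul0r.
move/sqnormXY_diag_eq0/eqP; rewrite Fm mulf_eq0 (negbTE U0).
by rewrite (negbTE Vm).
Qed.

End HermitianPoly.

Theorem corollary4p1 (R : realType) (n : nat) (c : 'M[R[i]]_n) :
  in_Qprime1 c -> has_pure_term c -> 0 < hpoly_at0 c.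
Proof.
case=> herm [c_ge0 [m [d [N [F [d_herm _ [z0 dz0] cdF]]]]]].
case=> k [i0 [_ [i00 pure]]].
have cdF_XY : hpolyXY c * hpolyXY d = sqnormXY F.
  apply/eqP; rewrite -subr_eq0; apply/eqP; apply: polyXY_zzbar_eq0 => z.
  by rewrite !(hornerD, hornerN, hornerM) !hpolyXY_evalE sqnormXY_evalE cdF subrr.
have at0 : hpoly_at0 c = (hpolyXY c)`_0`_0.
  by rewrite /hpoly_at0 -hpolyXY_evalE conjc0 hornerXY00.
rewrite lt0r c_ge0 andbT at0; apply: (sqnormXY_factor_coef00_neq0 cdF_XY).
- exact: hpolyXY_hermitian.
- by apply: contraNneq dz0 => d0; rewrite -hpolyXY_evalE d0 !horner0.
- apply/eqP => c0row; have cki0 : c k i0 = 0.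
    by rewrite -coef_hpolyXY_ord i00 c0row coef0.
  by case: pure; rewrite ?[c i0 k]herm cki0 ?conjc0 eqxx.
Qed.
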